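(* For any NSP expressions $d$ and $e_i$ ($i\in\mathbb{N}$), $\langle\!\langle \mathtt{case}\ d\ \mathtt{of}\ (i\Rightarrow e_i)\rangle\!\rangle = d[i\mapsto e_i]$.
   Context: NSP terms are the possibly infinite syntax trees generated coinductively by: procedures $p::=\lambda x_0\cdots x_{r-1}.e$; expressions $d,e::=\bot\mid n\ (n\in\mathbb{N})\mid \mathtt{case}\ a\ \mathtt{of}\ (i\Rightarrow e_i\mid i\in\mathbb{N})$; applications $a::=x\,q_0\cdots q_{r-1}$ (modulo $\alpha$-equivalence). Meta-terms additionally allow ground forms $P\vec Q$ and $\mathtt{case}\ G\ \mathtt{of}(\ldots)$ with $G$ an arbitrary ground meta-term (including an expression); they reduce by the $\beta$-rule $(\lambda\vec x.E)\vec Q\rightsquigarrow E[\vec x\mapsto\vec Q]$, $\mathtt{case}\ \bot\ \mathtt{of}(\ldots)\rightsquigarrow\bot$, $\mathtt{case}\ n\ \mathtt{of}\ (i\Rightarrow E_i)\rightsquigarrow E_n$, $\mathtt{case}\ (\mathtt{case}\ G\ \mathtt{of}\ (i\Rightarrow E_i))\ \mathtt{of}\ (j\Rightarrow F_j)\rightsquigarrow \mathtt{case}\ G\ \mathtt{of}\ (i\Rightarrow\mathtt{case}\ E_i\ \mathtt{of}\ (j\Rightarrow F_j))$, applied in head position and recursively under $\lambda$, in arguments of $x\vec Q$ and in branches of $\mathtt{case}\ x\vec Q\ \mathtt{of}(\ldots)$; $\langle\!\langle T\rangle\!\rangle$ is the supremum (syntactic order, $\bot$ least) of the finite terms lying below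 some reduct of $T$. The rightward numeral leaves of a term are defined inductively: $n$ is one in itself; those of $e$ are ones of $\lambda\vec x.e$; those of each $e_i$ are ones of $\mathtt{case}\ a\ \mathtt{of}\ (i\Rightarrow e_i)$. For a term $t$ and expressions $e_i$, $t[i\mapsto e_i]$ denotes the result of replacing each rightward numeral leaf occurrence $i$ in $t$ by $e_i$. *)

(* Nested sequential procedures (NSPs) and meta-terms as
   coinductive syntax trees, with de Bruijn variables (alpha-equivalence is
   built in). *)
From Stdlib Require Import Arith Relations.

(* A variable is written (k, j): the j-th parameter x_j of the k-th enclosing
   lambda (k = 0 is the innermost one).  Argument lists q_0 ... q_{r-1} are
   stored as an arity r together with a function nat -> proc (values at
   indices >= r are irrelevant); branches (i => E_i), i in nat, are functions
   nat -> exp. *)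

CoInductive mproc : Type :=
  | MLam (r : nat) (body : mexp)
with mexp : Type :=
  | MBot
  | MNum (n : nat)
  | MCase (g : mexp) (br : nat -> mexp)
  | MVar (k j : nat) (r : nat) (args : nat -> mproc)
  | MApp (p : mproc) (r : nat) (args : nat -> mproc).

CoInductive nsp_p : mproc -> Prop :=
  | nsp_lam r e : nsp_e e -> nsp_p (MLam r e)
with nsp_e : mexp -> Prop :=
  | nsp_bot : nsp_e MBot
  | nsp_num n : nsp_e (MNum n)
  | nsp_case k j r a br :
      (forall i, i < r -> nsp_p (a i)) ->
      (forall i, nsp_e (br i)) ->
      nsp_e (MCase (MVar k j r a) br).

CoInductive le_p : mproc -> mproc -> Prop :=
  | le_lam r e e' : le_e e e' -> le_p (MLam r e) (MLam r e')
with le_e : mexp -> mexp -> Prop :=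
  | le_bot T : le_e MBot T
  | le_num n : le_e (MNum n) (MNum n)
  | le_case g g' br br' :
      le_e g g' -> (forall i, le_e (br i) (br' i)) ->
      le_e (MCase g br) (MCase g' br')
  | le_var k j r a a' :
      (forall i, i < r -> le_p (a i) (a' i)) ->
      le_e (MVar k j r a) (MVar k j r a')
  | le_app p p' r a a' :
      le_p p p' -> (forall i, i < r -> le_p (a i) (a' i)) ->
      le_e (MApp p r a) (MApp p' r a').

Inductive fin_p : mproc -> Prop :=
  | fin_lam r e : fin_e e -> fin_p (MLam r e)
with fin_e : mexp -> Prop :=
  | fin_bot : fin_e MBot
  | fin_num n : fin_e (MNum n)
  | fin_case g br :
      fin_e g -> (forall i, fin_e (br i)) ->
      (exists N, forall i, N <= i -> br i = MBot) ->
      fin_e (MCase g br)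
  | fin_var k j r a :
      (forall i, i < r -> fin_p (a i)) -> fin_e (MVar k j r a)
  | fin_app p r a :
      fin_p p -> (forall i, i < r -> fin_p (a i)) -> fin_e (MApp p r a).

CoFixpoint shift_p (c d : nat) (p : mproc) : mproc :=
  match p with MLam r e => MLam r (shift_e (S c) d e) end
with shift_e (c d : nat) (e : mexp) : mexp :=
  match e with
  | MBot => MBot
  | MNum n => MNum n
  | MCase g br => MCase (shift_e c d g) (fun i => shift_e c d (br i))
  | MVar k j r a =>
      MVar (if c <=? k then k + d else k) j r (fun i => shift_p c d (a i))
  | MApp p r a => MApp (shift_p c d p) r (fun i => shift_p c d (a i))
  end.

CoFixpoint subst_p (c : nat) (Q : nat -> mproc) (p : mproc) : mproc :=
  match p with MLam r e => MLam r (subst_e (S c) Q e) end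
with subst_e (c : nat) (Q : nat -> mproc) (e : mexp) : mexp :=
  match e with
  | MBot => MBot
  | MNum n => MNum n
  | MCase g br => MCase (subst_e c Q g) (fun i => subst_e c Q (br i))
  | MVar k j r a =>
      if k =? c then MApp (shift_p 0 c (Q j)) r (fun i => subst_p c Q (a i))
      else MVar (if c <? k then pred k else k) j r (fun i => subst_p c Q (a i))
  | MApp p r a => MApp (subst_p c Q p) r (fun i => subst_p c Q (a i))
  end.

Definition upd {A : Type} (f : nat -> A) (i : nat) (x : A) : nat -> A :=
  fun n => if n =? i then x else f n.

Inductive hred : mexp -> mexp -> Prop :=
  | hred_beta r E Q : hred (MApp (MLam r E) r Q) (subst_e 0 Q E)
  | hred_case_bot br : hred (MCase MBot br) MBot
  | hred_case_num n br : hred (MCase (MNum n) br) (br n)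
  | hred_case_case G E F :
      hred (MCase (MCase G E) F) (MCase G (fun i => MCase (E i) F))
  | hred_case_cong G G' br : hred G G' -> hred (MCase G br) (MCase G' br).

Inductive red_p : mproc -> mproc -> Prop :=
  | red_lam r E E' : red E E' -> red_p (MLam r E) (MLam r E')
with red : mexp -> mexp -> Prop :=
  | red_head E E' : hred E E' -> red E E'
  | red_var_arg k j r a i p' :
      red_p (a i) p' -> red (MVar k j r a) (MVar k j r (upd a i p'))
  | red_case_var_arg k j r a G' br :
      red (MVar k j r a) G' -> red (MCase (MVar k j r a) br) (MCase G' br)
  | red_case_branch k j r a br i E' :
      red (br i) E' ->
      red (MCase (MVar k j r a) br) (MCase (MVar k j r a) (upd br i E')).

Definition reds : mexp -> mexp -> Prop := clos_refl_trans mexp red.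

Definition approx (T u : mexp) : Prop :=
  nsp_e u /\ fin_e u /\ exists T', reds T T' /\ le_e u T'.

Definition denot (T t : mexp) : Prop :=
  nsp_e t /\
  (forall u, approx T u -> le_e u t) /\
  (forall t', nsp_e t' -> (forall u, approx T u -> le_e u t') -> le_e t t').

CoFixpoint repl_leaves (e : nat -> mexp) (t : mexp) : mexp :=
  match t with
  | MNum n => e n
  | MCase g br => MCase g (fun i => repl_leaves e (br i))
  | t' => t'
  end.

From Stdlib Require Import Arith Relations Lia FunctionalExtensionality.

(* For NSP [d], a reduct of [case d of (i => e_i)] is obtained by commuting the
   case through the variable-headed cases of [d] (case-of-case) until it meets a
   leaf, where [case n of e] becomes [e_n]; the only other reductions happen
   inside NSP subterms, at argument positions beyond the arity, and leave them
   unchanged in the syntactic order.  So every NSP term below a reduct lies below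
   [d[i := e_i]].  Conversely, a finite approximant of [d[i := e_i]] uses only
   finitely many branches, and finitely many commutation steps expose them.
   Since NSP terms are algebraic (an NSP term lies below any term dominating all
   its finite NSP approximants), [d[i := e_i]] is the supremum. *)

Lemma le_e_refl (x : mexp) : le_e x x
with le_p_refl (p : mproc) : le_p p p.
Proof.
  - destruct x; constructor; intros; first [apply le_e_refl | apply le_p_refl].
  - destruct p; constructor; apply le_e_refl.
Qed.

Lemma le_e_trans (x y z : mexp) : le_e x y -> le_e y z -> le_e x z
with le_p_trans (p q s : mproc) : le_p p q -> le_p q s -> le_p p s.
Proof.
  - intros Hxy Hyz; destruct Hxy; inversion Hyz; subst; constructor; intros;
      first [eapply le_e_trans | eapply le_p_trans]; eauto.
  - intros Hpq Hqs; destruct Hpq; inversion Hqs; subst; constructor; eauto.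
Qed.

Definition force (t : mexp) : mexp :=
  match t with
  | MBot => MBot
  | MNum n => MNum n
  | MCase g br => MCase g br
  | MVar k j r a => MVar k j r a
  | MApp p r a => MApp p r a
  end.

Lemma force_eq (t : mexp) : t = force t.
Proof. destruct t; reflexivity. Qed.

Section ReplLeaves.
Variable e : nat -> mexp.

Lemma repl_leaves_bot : repl_leaves e MBot = MBot.
Proof. exact (force_eq _). Qed.

Lemma repl_leaves_num n : repl_leaves e (MNum n) = e n.
Proof. rewrite (force_eq (repl_leaves _ _)); simpl; destruct (e n); reflexivity. Qed.

Lemma repl_leaves_case g br :
  repl_leaves e (MCase g br) = MCase g (fun i => repl_leaves e (br i)).
Proof. exact (force_eq _). Qed.

Lemma nsp_repl_leaves :
  (forall i, nsp_e (e i)) -> forall d, nsp_e d -> nsp_e (repl_leaves e d).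
Proof.
  intros He; cofix IH; intros d Hd; destruct Hd as [| n | k j r a br Ha Hbr].
  - rewrite repl_leaves_bot; constructor.
  - rewrite repl_leaves_num; apply He.
  - rewrite repl_leaves_case; constructor; [exact Ha | intros i; apply (IH _ (Hbr i))].
Qed.
End ReplLeaves.

Lemma upd_eq {A : Type} (f : nat -> A) i x : upd f i x i = x.
Proof. unfold upd; rewrite Nat.eqb_refl; reflexivity. Qed.

Lemma upd_spec {A : Type} (P : nat -> A -> Prop) (f : nat -> A) i x n :
  P i x -> P n (f n) -> P n (upd f i x n).
Proof. unfold upd; destruct (Nat.eqb_spec n i); subst; auto. Qed.

Definition fin_le_e (t t' : mexp) : Prop :=
  forall u, nsp_e u -> fin_e u -> le_e u t -> le_e u t'.

Definition fin_le_p (p p' : mproc) : Prop :=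
  forall v, nsp_p v -> fin_p v -> le_p v p -> le_p v p'.

Definition lam_bot (p : mproc) : mproc := match p with MLam r _ => MLam r MBot end.

Lemma lam_bot_le p : le_p (lam_bot p) p.
Proof. destruct p; repeat constructor. Qed.

Lemma nsp_lam_bot p : nsp_p (lam_bot p).
Proof. destruct p; repeat constructor. Qed.

Lemma fin_lam_bot p : fin_p (lam_bot p).
Proof. destruct p; repeat constructor. Qed.

Lemma fin_le_lam r e p' :
  fin_le_p (MLam r e) p' -> exists e', p' = MLam r e' /\ fin_le_e e e'.
Proof.
  intros H.
  assert (Hbot : le_p (MLam r MBot) p') by (apply H; repeat constructor).
  inversion Hbot as [r' b e' _]; subst.
  exists e'; split; [reflexivity |].
  intros u Hu Hf Hle.
  assert (Hu' : le_p (MLam r u) (MLam r e')) by (apply H; constructor; assumption).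
  inversion Hu'; assumption.
Qed.

Lemma fin_le_num n t' : fin_le_e (MNum n) t' -> t' = MNum n.
Proof.
  intros H.
  assert (Hn : le_e (MNum n) t') by (apply H; constructor).
  inversion Hn; reflexivity.
Qed.

Lemma le_case_var_inv k j r a br t' :
  le_e (MCase (MVar k j r a) br) t' ->
  exists a' br', t' = MCase (MVar k j r a') br' /\
    (forall i, i < r -> le_p (a i) (a' i)) /\ (forall i, le_e (br i) (br' i)).
Proof.
  intros H; inversion H as [| | g g' b b' Hg Hb | |]; subst.
  inversion Hg; subst; eauto 6.
Qed.

Section FinLeCase.
Variables (k j r : nat) (a : nat -> mproc) (br : nat -> mexp) (t' : mexp).
Hypothesis Hle : fin_le_e (MCase (MVar k j r a) br) t'.

Lemma fin_le_case_approx a1 br1 :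
  (forall i, i < r -> nsp_p (a1 i) /\ fin_p (a1 i) /\ le_p (a1 i) (a i)) ->
  (forall i, nsp_e (br1 i) /\ fin_e (br1 i) /\ le_e (br1 i) (br i)) ->
  (exists N, forall i, N <= i -> br1 i = MBot) ->
  le_e (MCase (MVar k j r a1) br1) t'.
Proof.
  intros Ha1 Hbr1 HN; apply Hle.
  - constructor; intros i; [intros Hi; apply Ha1 | apply Hbr1]; auto.
  - constructor; [constructor |..]; auto; intros i; [intros Hi; apply Ha1 | apply Hbr1]; auto.
  - constructor; [constructor |]; intros i; [intros Hi; apply Ha1 | apply Hbr1]; auto.
Qed.

Let a0 (i : nat) : mproc := lam_bot (a i).

Lemma args_bot_approx i :
  i < r -> nsp_p (a0 i) /\ fin_p (a0 i) /\ le_p (a0 i) (a i).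
Proof.
  intros _; split; [| split]; [apply nsp_lam_bot | apply fin_lam_bot | apply lam_bot_le].
Qed.

Lemma branches_bot_approx i :
  nsp_e MBot /\ fin_e MBot /\ le_e MBot (br i).
Proof. repeat constructor. Qed.

Lemma fin_le_case :
  exists a' br', t' = MCase (MVar k j r a') br' /\
    (forall i, i < r -> fin_le_p (a i) (a' i)) /\ (forall i, fin_le_e (br i) (br' i)).
Proof.
  assert (Hbot : le_e (MCase (MVar k j r a0) (fun _ => MBot)) t').
  { apply fin_le_case_approx;
      [apply args_bot_approx | apply branches_bot_approx | exists 0; reflexivity]. }
  apply le_case_var_inv in Hbot as (a' & br' & Ht' & _).
  exists a', br'; split; [exact Ht' | split].
  - intros i Hi v Hv Hf Hvle.
    assert (Hv' : le_e (MCase (MVar k j r (upd a0 i v)) (fun _ => MBot)) t').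
    { apply fin_le_case_approx;
        [| apply branches_bot_approx | exists 0; reflexivity].
      intros n; apply (upd_spec (fun n p => n < r -> nsp_p p /\ fin_p p /\ le_p p (a n)));
        [auto | apply args_bot_approx]. }
    rewrite Ht' in Hv'; apply le_case_var_inv in Hv' as (a1 & b1 & Heq & Ha1 & _).
    injection Heq as <- <-; specialize (Ha1 i Hi); rewrite upd_eq in Ha1; exact Ha1.
  - intros i u Hu Hf Hule.
    assert (Hu' : le_e (MCase (MVar k j r a0) (upd (fun _ => MBot) i u)) t').
    { apply fin_le_case_approx; [apply args_bot_approx | |].
      - intros n; apply (upd_spec (fun n t => nsp_e t /\ fin_e t /\ le_e t (br n)));
        [auto | apply branches_bot_approx].
      - exists (S i); intros n Hn; unfold upd.
        destruct (Nat.eqb_spec n i); [lia | reflexivity]. }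
    rewrite Ht' in Hu'; apply le_case_var_inv in Hu' as (a1 & b1 & Heq & _ & Hb1).
    injection Heq as <- <-; specialize (Hb1 i); rewrite upd_eq in Hb1; exact Hb1.
Qed.
End FinLeCase.

Lemma le_of_fin_le_e (t t' : mexp) : nsp_e t -> fin_le_e t t' -> le_e t t'
with le_of_fin_le_p (p p' : mproc) : nsp_p p -> fin_le_p p p' -> le_p p p'.
Proof.
  - intros Ht Hle; destruct Ht as [| n | k j r a br Ha Hbr].
    + constructor.
    + rewrite (fin_le_num _ _ Hle); constructor.
    + destruct (fin_le_case _ _ _ _ _ _ Hle) as (a' & br' & -> & Ha' & Hbr').
      constructor; [constructor |]; intros i.
      * intros Hi; apply le_of_fin_le_p; [apply Ha | apply Ha']; exact Hi.
      * apply le_of_fin_le_e; [apply Hbr | apply Hbr'].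
  - intros Hp Hle; destruct Hp as [r e He].
    destruct (fin_le_lam _ _ _ Hle) as (e' & -> & He').
    constructor; apply le_of_fin_le_e; assumption.
Qed.

Definition args_below (r : nat) (a' a : nat -> mproc) : Prop :=
  forall i, i < r -> nsp_p (a' i) /\ le_p (a' i) (a i).

Lemma hred_case_var k j r a br E : hred (MCase (MVar k j r a) br) E -> False.
Proof. intros H; inversion H as [| | | | G G' b Hg]; inversion Hg. Qed.

Lemma hred_nsp E E' : nsp_e E -> hred E E' -> False.
Proof.
  intros [| n | k j r a br _ _] H;
    [inversion H | inversion H | exact (hred_case_var _ _ _ _ _ _ H)].
Qed.

Scheme red_mut := Induction for red Sort Prop
  with red_p_mut := Induction for red_p Sort Prop.

Lemma red_nsp_mut :
  forall E E', red E E' ->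
    (nsp_e E -> nsp_e E' /\ le_e E' E) /\
    (forall k j r a, E = MVar k j r a -> (forall i, i < r -> nsp_p (a i)) ->
       exists a', E' = MVar k j r a' /\ args_below r a' a).
Proof.
  apply red_mut with (P0 := fun p p' _ => nsp_p p -> nsp_p p' /\ le_p p' p).
  - intros E E' H; split.
    + intros Hn; exfalso; exact (hred_nsp _ _ Hn H).
    + intros k j r a -> _; inversion H.
  - intros k j r a i p' _ IH; split.
    + intros Hn; inversion Hn.
    + intros k' j' r' a' Heq Ha; injection Heq as <- <- <- <-.
      exists (upd a i p'); split; [reflexivity |].
      intros n; apply (upd_spec (fun n q => n < r -> nsp_p q /\ le_p q (a n))); intros Hn.
      * apply IH, Ha, Hn.
      * split; [apply Ha, Hn | apply le_p_refl].
  - intros k j r a G' br _ IH; split; [| discriminate].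
    intros Hn; inversion Hn as [| | k' j' r' a' br' Ha Hbr]; subst.
    destruct (proj2 IH k j r a eq_refl Ha) as (a'' & -> & Ha'').
    split; constructor; try constructor; intros; try apply Ha''; auto using le_e_refl.
  - intros k j r a br i E' _ IH; split; [| discriminate].
    intros Hn; inversion Hn as [| | k' j' r' a' br' Ha Hbr]; subst.
    destruct (proj1 IH (Hbr i)) as [Hn' Hle].
    split; constructor; auto using le_e_refl; intros n.
    + apply (upd_spec (fun _ t => nsp_e t)); auto.
    + apply (upd_spec (fun n t => le_e t (br n))); auto using le_e_refl.
  - intros r E E' _ IH Hn; inversion Hn as [r' e He]; subst.
    destruct (proj1 IH He); split; constructor; assumption.
Qed.

Lemma red_nsp E E' : red E E' -> nsp_e E -> nsp_e E' /\ le_e E' E.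
Proof. intros H; exact (proj1 (red_nsp_mut _ _ H)). Qed.

Lemma red_var_nsp k j r a G :
  red (MVar k j r a) G -> (forall i, i < r -> nsp_p (a i)) ->
  exists a', G = MVar k j r a' /\ args_below r a' a.
Proof. intros H; exact (proj2 (red_nsp_mut _ _ H) k j r a eq_refl). Qed.

Lemma red_case_nsp d e T :
  nsp_e d -> red (MCase d e) T ->
  (d = MBot /\ T = MBot) \/ (exists n, d = MNum n /\ T = e n) \/
  (exists k j r a br, d = MCase (MVar k j r a) br /\
     T = MCase (MVar k j r a) (fun i => MCase (br i) e)).
Proof.
  intros Hd H; inversion H as [E E' Hh | | k j r a G' br Hv | k j r a br i E' Hb];
    subst; [| inversion Hd | inversion Hd].
  inversion Hh as [| | | G E F | G G' br Hg]; subst.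
  - left; auto.
  - right; left; eauto.
  - right; right; inversion Hd; eauto 8.
  - exfalso; exact (hred_nsp _ _ Hd Hg).
Qed.

Lemma finite_choice {A : Type} (P : nat -> A -> Prop) (x0 : A) N :
  (forall i, i < N -> exists y, P i y) -> exists f, forall i, i < N -> P i (f i).
Proof.
  induction N as [| N IH]; intros H.
  - exists (fun _ => x0); intros i Hi; lia.
  - destruct IH as [f Hf]; [intros i Hi; apply H; lia |].
    destruct (H N) as [y Hy]; [lia |].
    exists (upd f N y); intros i Hi; unfold upd.
    destruct (Nat.eqb_spec i N); [subst; exact Hy | apply Hf; lia].
Qed.

Lemma reds_case_branch k j r a br i T :
  reds (br i) T ->
  reds (MCase (MVar k j r a) br) (MCase (MVar k j r a) (upd br i T)).
Proof.
  intros H; apply clos_rt_rtn1 in H; induction H as [| T T' Hr _ IH].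
  - replace (upd br i (br i)) with br; [apply rt_refl |].
    apply functional_extensionality; intros n; unfold upd.
    destruct (Nat.eqb_spec n i); subst; reflexivity.
  - eapply rt_trans; [exact IH | apply rt_step].
    replace (upd br i T') with (upd (upd br i T) i T').
    + apply red_case_branch; rewrite upd_eq; exact Hr.
    + apply functional_extensionality; intros n; unfold upd.
      destruct (n =? i); reflexivity.
Qed.

Lemma reds_case_branches k j r a br br' N :
  (forall i, i < N -> reds (br i) (br' i)) ->
  reds (MCase (MVar k j r a) br)
       (MCase (MVar k j r a) (fun i => if i <? N then br' i else br i)).
Proof.
  induction N as [| N IH]; intros H.
  - apply rt_refl.
  - eapply rt_trans; [apply IH; intros i Hi; apply H; lia |].
    replace (fun i => if i <? S N then br' i else br i)
      with (upd (fun i => if i <? N then br' i else br i) N (br' N)).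
    + apply reds_case_branch.
      rewrite Nat.ltb_irrefl; apply H; lia.
    + apply functional_extensionality; intros n; unfold upd.
      destruct (Nat.eqb_spec n N), (Nat.ltb_spec n N), (Nat.ltb_spec n (S N));
        subst; try reflexivity; lia.
Qed.

Section CaseReducts.
Variable e : nat -> mexp.
Hypothesis nsp_branches : forall i, nsp_e (e i).

(* The reducts of [case d of e]: the case has been commuted through the
   variable-headed cases of [d], and each leaf [n] it reached became a term
   below [e n]. *)
Inductive case_reduct : mexp -> mexp -> Prop :=
  | case_reduct_init d : case_reduct d (MCase d e)
  | case_reduct_num n T : nsp_e T -> le_e T (e n) -> case_reduct (MNum n) T
  | case_reduct_bot : case_reduct MBot MBot
  | case_reduct_case k j r a br a' br' :
      args_below r a' a -> (forall i, case_reduct (br i) (br' i)) ->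
      case_reduct (MCase (MVar k j r a) br) (MCase (MVar k j r a') br').

Lemma case_reduct_red d T T' :
  nsp_e d -> case_reduct d T -> red T T' -> case_reduct d T'.
Proof.
  intros Hd HT; revert T'; induction HT as [d | n T HT Hle | | k j r a br a' br' Ha' Hbr' IH];
    intros T' Hr.
  - destruct (red_case_nsp _ _ _ Hd Hr)
      as [[-> ->] | [(n & -> & ->) | (k & j & r & a & br & -> & ->)]].
    + constructor.
    + constructor; [apply nsp_branches | apply le_e_refl].
    + constructor; [| intros; constructor].
      inversion Hd as [| | k' j' r' a' br' Ha _]; subst.
      intros i Hi; split; [apply Ha, Hi | apply le_p_refl].
  - destruct (red_nsp _ _ Hr HT); constructor; [| eapply le_e_trans]; eauto.
  - inversion Hr as [E E' Hh | | |]; inversion Hh.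
  - inversion Hd as [| | k' j' r' a'' br'' Ha Hbr]; subst.
    inversion Hr as [E E' Hh | | k1 j1 r1 a1 G' br1 Hv | k1 j1 r1 a1 br1 i E' Hb]; subst.
    + exfalso; eapply hred_case_var; eauto.
    + destruct (red_var_nsp _ _ _ _ _ Hv) as (a2 & -> & Ha2).
      { intros i Hi; apply Ha', Hi. }
      constructor; [| assumption].
      intros i Hi; destruct (Ha2 i Hi), (Ha' i Hi).
      split; [| eapply le_p_trans]; eauto.
    + constructor; [assumption |].
      intros n; apply (upd_spec (fun n t => case_reduct (br n) t)); auto.
Qed.

Lemma case_reduct_reds d T : nsp_e d -> reds (MCase d e) T -> case_reduct d T.
Proof.
  intros Hd H; apply clos_rt_rtn1 in H; induction H as [| T T' Hr _ IH].
  - constructor.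
  - exact (case_reduct_red _ _ _ Hd IH Hr).
Qed.

Lemma case_reduct_below d T u :
  case_reduct d T -> nsp_e d -> nsp_e u -> le_e u T -> le_e u (repl_leaves e d).
Proof.
  intros HT; revert u; induction HT as [d | n T HT Hle | | k j r a br a' br' Ha' _ IH];
    intros u Hd Hu Hule.
  - inversion Hu as [| | k j r a br _ _]; subst; [constructor | inversion Hule |].
    inversion Hule as [| | g g' b b' Hg _ | |]; subst.
    inversion Hg; subst; inversion Hd.
  - rewrite repl_leaves_num; eapply le_e_trans; eauto.
  - inversion Hule; constructor.
  - rewrite repl_leaves_case.
    inversion Hd as [| | k0 j0 r0 a0 br0 Ha Hbr]; subst.
    inversion Hu as [| | k1 j1 r1 a1 br1 Ha1 Hbr1]; subst; [constructor | inversion Hule |].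
    apply le_case_var_inv in Hule as (a2 & b2 & Heq & Hle_a & Hle_br).
    injection Heq as <- <- <- <- <-.
    constructor; [constructor |]; intros i.
    + intros Hi; eapply le_p_trans; [apply Hle_a | apply Ha']; exact Hi.
    + apply IH; auto.
Qed.

Lemma below_reduct_of_fin_le_repl_leaves u :
  fin_e u -> forall d, nsp_e d -> nsp_e u -> le_e u (repl_leaves e d) ->
  exists T, reds (MCase d e) T /\ le_e u T.
Proof.
  intros Hf; induction Hf as [| n | g br _ _ _ IH [N HN] | |];
    intros d Hd Hu Hle; [| | | inversion Hu | inversion Hu];
    [exists (MCase d e); split; [apply rt_refl | constructor] | ..].
  all: destruct Hd as [| m | k j r a br0 Ha Hbr0];
    [rewrite repl_leaves_bot in Hle; inversion Hle
    | rewrite repl_leaves_num in Hle; exists (e m);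
      split; [apply rt_step, red_head; constructor | exact Hle] |].
  - rewrite repl_leaves_case in Hle; inversion Hle.
  - rewrite repl_leaves_case in Hle.
    inversion Hu as [| | k' j' r' a' br' _ Hbr]; subst.
    apply le_case_var_inv in Hle as (a2 & b2 & Heq & Hle_a & Hle_br).
    injection Heq as <- <- <- <- <-.
    destruct (finite_choice
                (fun i T => reds (MCase (br0 i) e) T /\ le_e (br i) T) MBot N)
      as [T HT].
    { intros i _; apply IH; auto. }
    exists (MCase (MVar k j r a)
              (fun i => if i <? N then T i else MCase (br0 i) e)); split.
    + eapply rt_trans; [apply rt_step, red_head; constructor |].
      apply reds_case_branches; intros i Hi; apply HT, Hi.
    + constructor; [constructor; exact Hle_a |]; intros i.
      destruct (Nat.ltb_spec i N); [apply HT; assumption |].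
      rewrite HN by lia; constructor.
Qed.
End CaseReducts.

Theorem lemma3p4 (d : mexp) (e : nat -> mexp) :
  nsp_e d -> (forall i, nsp_e (e i)) ->
  denot (MCase d e) (repl_leaves e d).
Proof.
  intros Hd He; split; [| split].
  - apply nsp_repl_leaves; assumption.
  - intros u (Hu & _ & T & Hr & Hle).
    eapply case_reduct_below; eauto using case_reduct_reds.
  - intros t' _ Hub; apply le_of_fin_le_e; [apply nsp_repl_leaves; assumption |].
    intros u Hu Hf Hle; apply Hub; repeat split; try assumption.
    apply below_reduct_of_fin_le_repl_leaves; assumption.
Qed.
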